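(* Let $p$ be a prime and $m\ge0$. For $d\ge0$ write $d=q^{(m)}_dp^m+r$ with $0\le r<p^m$. Let $x,y$ be the standard coordinates on $\mathbb{P}^1$ with $xy=1$, and put $\partial_x^{\langle d\rangle_{(m)}}=\frac{q^{(m)}_d!}{d!}\partial_x^d$ and $\partial_y^{\langle d\rangle_{(m)}}=\frac{q^{(m)}_d!}{d!}\partial_y^d$. Then for every $s\ge1$ $$\partial_y^{\langle s\rangle_{(m)}}=(-1)^s\sum_{t=1}^sa^{(m)}_{s,t}x^{s+t}\partial_x^{\langle t\rangle_{(m)}},\qquad a^{(m)}_{s,t}=\binom{s}{t}\frac{(s-1)!}{(t-1)!}\frac{q^{(m)}_s!}{s!}\Big(\frac{q^{(m)}_t!}{t!}\Big)^{-1}=\binom{s-1}{t-1}\frac{q^{(m)}_s!}{q^{(m)}_t!}.$$ These numbers are integers, and $a^{(m)}_{s,1}=q^{(m)}_s!$, $a^{(m)}_{s,s}=1$. *)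

From Stdlib Require Import Reals ZArith Znumtheory Arith.
From Coquelicot Require Import Coquelicot.
Open Scope R_scope.

Definition qm (p m d : nat) : nat := Nat.div d (Nat.pow p m).

(* the normalising factor q^{(m)}_d! / d!, so that
   partial^{<d>_(m)} = dpf p m d * partial^d *)
Definition dpf (p m d : nat) : R := INR (fact (qm p m d)) / INR (fact d).

Definition acoef (p m s t : nat) : R :=
  Binomial.C s t * (INR (fact (s - 1)) / INR (fact (t - 1)))
  * dpf p m s * / dpf p m t.

From Stdlib Require Import Reals ZArith Znumtheory Arith Lia Lra.
From Coquelicot Require Import Coquelicot.
Open Scope R_scope.

(* With y = 1/x, induction on s gives
   d^s/dy^s f(1/y) = (-1)^s sum_t L(s,t) y^(-s-t) f^(t)(1/y), where
   the unsigned Lah numbers L(s,t) = C(s,t) (s-1)!/(t-1)! are characterised by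
   L(s+1,t) = (s+t) L(s,t) + L(s,t-1).  Multiplying by q_s!/s! turns L(s,t)
   into a_{s,t} q_t!/t!, and a_{s,t} = C(s-1,t-1) q_s!/q_t! is an integer since
   q_t <= q_s. *)

Fixpoint lah (n t : nat) : R :=
  match n with
  | O => match t with O => 1 | _ => 0 end
  | S n' => (INR n' + INR t) * lah n' t +
            match t with O => 0 | S t' => lah n' t' end
  end.

Lemma lah_above_diag n t : (n < t)%nat -> lah n t = 0.
Proof.
  revert t; induction n as [|n IH]; intros t Hnt; simpl.
  - destruct t; [lia | reflexivity].
  - destruct t as [|t]; [lia|]. rewrite !IH by lia. ring.
Qed.

Lemma lah_S_0 n : lah (S n) 0 = 0.
Proof. induction n as [|n IH]; simpl in *; [|rewrite IH]; ring. Qed.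

Lemma lah_diag n : lah n n = 1.
Proof.
  induction n as [|n IH]; [reflexivity|].
  simpl. rewrite lah_above_diag, IH by lia. ring.
Qed.

Lemma lah_1 n : (1 <= n)%nat -> lah n 1 = INR (fact n).
Proof.
  induction n as [|[|n] IH]; intros Hn; [lia | simpl; ring |].
  change (lah (S (S n)) 1) with ((INR (S n) + 1) * lah (S n) 1 + lah (S n) 0).
  rewrite IH, lah_S_0 by lia.
  change (fact (S (S n))) with (S (S n) * fact (S n))%nat.
  rewrite mult_INR, !S_INR. ring.
Qed.

Definition lah_formula (n t : nat) : R :=
  Binomial.C n t * INR (fact (n - 1)) / INR (fact (t - 1)).

Lemma INR_fact_S n : INR (fact (S n)) = INR (S n) * INR (fact n).
Proof. apply mult_INR. Qed.

Lemma lah_formula_factorials a k :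
  lah_formula (S a + k) (S a) =
  INR (fact (S a + k)) * INR (fact (a + k)) /
  (INR (fact (S a)) * INR (fact k) * INR (fact a)).
Proof.
  unfold lah_formula, Binomial.C.
  replace (S a + k - S a)%nat with k by lia.
  replace (S a + k - 1)%nat with (a + k)%nat by lia.
  replace (S a - 1)%nat with a by lia.
  field. repeat split; apply INR_fact_neq_0.
Qed.

Lemma lah_formula_rec n t : (2 <= t <= n)%nat ->
  lah_formula (S n) t = (INR n + INR t) * lah_formula n t + lah_formula n (t - 1).
Proof.
  intros Ht.
  destruct t as [|[|a]]; [lia | lia |].
  destruct (Nat.le_exists_sub (S (S a)) n ltac:(lia)) as [k [-> _]].
  replace (S (S a) - 1)%nat with (S a) by lia.
  replace (S (k + S (S a))) with (S (S a) + S k)%nat by lia.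
  replace (k + S (S a))%nat with (S (S a) + k)%nat at 2 by lia.
  replace (k + S (S a))%nat with (S a + S k)%nat by lia.
  rewrite !lah_formula_factorials.
  replace (S (S a) + S k)%nat with (S (S (S (a + k)))) by lia.
  replace (S (S a) + k)%nat with (S (S (a + k))) by lia.
  replace (S a + S k)%nat with (S (S (a + k))) by lia.
  replace (S a + k)%nat with (S (a + k)) by lia.
  replace (a + S k)%nat with (S (a + k)) by lia.
  rewrite !INR_fact_S, !S_INR, !plus_INR.
  pose proof (pos_INR a); pose proof (pos_INR k).
  field. repeat split; try apply INR_fact_neq_0; lra.
Qed.

Lemma lah_eq_formula n t : (1 <= t <= n)%nat -> lah n t = lah_formula n t.
Proof.
  revert t; induction n as [|n IH]; intros t Ht; [lia|].
  destruct (Nat.eq_dec t (S n)) as [->|Hn].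
  { rewrite lah_diag. unfold lah_formula. rewrite C_n_n.
    field. apply INR_fact_neq_0. }
  destruct (Nat.eq_dec t 1) as [->|H1].
  { rewrite lah_1 by lia.
    replace (S n) with (S 0 + n)%nat by lia. rewrite lah_formula_factorials.
    simpl (0 + n)%nat. change (INR (fact 1)) with 1. change (INR (fact 0)) with 1.
    field. apply INR_fact_neq_0. }
  destruct t as [|[|t]]; [lia | lia |].
  rewrite lah_formula_rec by lia. simpl lah. simpl (S (S t) - 1)%nat.
  rewrite !IH by lia. reflexivity.
Qed.

Lemma is_derive_inv_pow_Derive_n (c : R) (K t : nat) (f : R -> R) (y : R) :
  y <> 0 -> ex_derive (Derive_n f t) (/ y) ->
  is_derive (fun z => c * (/ z) ^ K * Derive_n f t (/ z)) y
    (- (c * INR K) * (/ y) ^ (S K) * Derive_n f t (/ y)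
     - c * (/ y) ^ (S (S K)) * Derive_n f (S t) (/ y)).
Proof.
  intros Hy Hd. auto_derive.
  - repeat split; auto.
  - change (Derive (fun x : R => Derive_n f t x) (/ y)) with (Derive_n f (S t) (/ y)).
    destruct K; simpl; field; auto.
Qed.

Lemma sum_n_m_Rplus (u v : nat -> R) (a b : nat) :
  sum_n_m (fun k => u k + v k) a b = sum_n_m u a b + sum_n_m v a b.
Proof. exact (sum_n_m_plus u v a b). Qed.

Lemma sum_n_m_ext_R (u v : nat -> R) (a b : nat) :
  (forall k, (a <= k <= b)%nat -> u k = v k) -> sum_n_m u a b = sum_n_m v a b.
Proof. exact (sum_n_m_ext_loc u v a b). Qed.

Lemma lah_sum_derive_step n (w : R) (g : nat -> R) :
  (-1) ^ n * sum_n_m (fun t => - (lah n t * INR (n + t)) * w ^ S (n + t) * g t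
                              - lah n t * w ^ S (S (n + t)) * g (S t)) 0 n
  = (-1) ^ S n * sum_n_m (fun u => lah (S n) u * w ^ (S n + u) * g u) 0 (S n).
Proof.
  set (A := sum_n_m (fun t => lah n t * INR (n + t) * w ^ S (n + t) * g t) 0 n).
  set (B := sum_n_m (fun t => lah n t * w ^ S (S (n + t)) * g (S t)) 0 n).
  assert (HA : sum_n_m (fun u => (INR n + INR u) * lah n u * w ^ (S n + u) * g u) 0 (S n) = A).
  { rewrite sum_n_Sm, lah_above_diag by lia.
    change (plus ?x ?y) with (x + y). rewrite Rmult_0_r, !Rmult_0_l, Rplus_0_r.
    apply sum_n_m_ext_R. intros k _.
    rewrite plus_INR. replace (S n + k)%nat with (S (n + k)) by lia. ring. }
  assert (HB : sum_n_m (fun u => match u with O => 0 | S u' => lah n u' end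
                              * w ^ (S n + u) * g u) 0 (S n) = B).
  { rewrite sum_Sn_m by lia.
    change (plus ?x ?y) with (x + y). rewrite !Rmult_0_l, Rplus_0_l.
    rewrite <- sum_n_m_S. apply sum_n_m_ext_R. intros k _.
    replace (S n + S k)%nat with (S (S (n + k))) by lia. reflexivity. }
  assert (HL : sum_n_m (fun t => - (lah n t * INR (n + t)) * w ^ S (n + t) * g t
                              - lah n t * w ^ S (S (n + t)) * g (S t)) 0 n
            = -1 * (A + B)).
  { unfold A, B. rewrite <- sum_n_m_Rplus, <- (sum_n_m_mult_l (K := R_Ring)).
    apply sum_n_m_ext_R. intros k _. change (mult ?x ?y) with (x * y). ring. }
  rewrite HL, <- HA, <- HB, <- sum_n_m_Rplus.
  rewrite (sum_n_m_ext_R _ (fun u => lah (S n) u * w ^ (S n + u) * g u)).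
  - simpl pow. ring.
  - intros k _. simpl lah. ring.
Qed.

Lemma Derive_n_comp_Rinv (f : R -> R) (x : R) : x <> 0 ->
  locally x (fun z => forall k, ex_derive_n f k z) ->
  forall n, locally (/ x) (fun y =>
    Derive_n (fun y => f (/ y)) n y
    = (-1) ^ n * sum_n_m (fun t => lah n t * (/ y) ^ (n + t) * Derive_n f t (/ y)) 0 n).
Proof.
  intros Hx Hf.
  assert (Hx' : / x <> 0) by now apply Rinv_neq_0_compat.
  assert (Hnear : locally (/ x) (fun y => y <> 0 /\ forall k, ex_derive_n f k (/ y))).
  { apply filter_and; [exact (open_neq 0 _ Hx')|].
    apply (continuous_Rinv _ Hx' (fun z => forall k, ex_derive_n f k z)).
    now rewrite Rinv_inv. }
  induction n as [|n IH].
  - apply filter_forall. intros y. rewrite sum_n_n. simpl. ring.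
  - apply locally_locally in IH.
    generalize (filter_and _ _ IH Hnear). apply filter_imp.
    intros y [Hn [Hy Hd]].
    change (Derive_n _ (S n) y) with (Derive (Derive_n (fun y => f (/ y)) n) y).
    rewrite (Derive_ext_loc _ _ _ Hn).
    apply is_derive_unique.
    rewrite <- lah_sum_derive_step.
    apply is_derive_scal.
    apply (is_derive_sum_n (K := R_AbsRing) (V := R_NormedModule)
             (fun t z => lah n t * (/ z) ^ (n + t) * Derive_n f t (/ z))).
    intros k _. apply is_derive_inv_pow_Derive_n; [exact Hy | exact (Hd (S k))].
Qed.

Lemma dpf_neq_0 p m d : dpf p m d <> 0.
Proof.
  unfold dpf. apply Rmult_integral_contrapositive_currified;
    [|apply Rinv_neq_0_compat]; apply INR_fact_neq_0.
Qed.

Lemma acoef_lah p m s t : (1 <= t <= s)%nat ->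
  acoef p m s t = lah s t * dpf p m s / dpf p m t.
Proof.
  intros Ht. rewrite lah_eq_formula by exact Ht.
  unfold acoef, lah_formula.
  pose proof (dpf_neq_0 p m t). pose proof (INR_fact_neq_0 (t - 1)).
  field. tauto.
Qed.

Lemma scaled_Derive_n_comp_Rinv p m s (f : R -> R) (x : R) : (1 <= s)%nat -> x <> 0 ->
  locally x (fun z => forall k, ex_derive_n f k z) ->
  dpf p m s * Derive_n (fun y => f (/ y)) s (/ x)
  = (-1) ^ s * sum_n_m (fun t => acoef p m s t * x ^ (s + t) * (dpf p m t * Derive_n f t x)) 1 s.
Proof.
  intros Hs Hx Hf.
  rewrite (locally_singleton _ _ (Derive_n_comp_Rinv f x Hx Hf s)), Rinv_inv.
  destruct s as [|s]; [lia|].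
  rewrite sum_Sn_m, lah_S_0 by lia. change (plus ?a ?b) with (a + b).
  set (g t := lah (S s) t * x ^ (S s + t) * Derive_n f t x).
  assert (Hsum : sum_n_m (fun t => acoef p m (S s) t * x ^ (S s + t) * (dpf p m t * Derive_n f t x)) 1 (S s)
                 = dpf p m (S s) * sum_n_m g 1 (S s)).
  { transitivity (sum_n_m (fun t => mult (dpf p m (S s)) (g t)) 1 (S s));
      [|exact (sum_n_m_mult_l (K := R_Ring) _ g 1 (S s))].
    apply sum_n_m_ext_R. intros t Ht. rewrite acoef_lah by lia.
    unfold g. pose proof (dpf_neq_0 p m t). change (mult ?a ?b) with (a * b).
    field. assumption. }
  rewrite Hsum. ring.
Qed.

Lemma acoef_binomial p m s t : (1 <= t <= s)%nat ->
  acoef p m s t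
  = Binomial.C (s - 1) (t - 1) * INR (fact (qm p m s)) / INR (fact (qm p m t)).
Proof.
  intros Ht. unfold acoef, dpf, Binomial.C.
  replace (s - 1 - (t - 1))%nat with (s - t)%nat by lia.
  destruct s as [|s]; [lia|]. destruct t as [|t]; [lia|].
  simpl (S s - 1)%nat. simpl (S t - 1)%nat.
  rewrite !INR_fact_S. field.
  repeat split; try apply INR_fact_neq_0; apply not_0_INR; lia.
Qed.

Lemma binomial_is_nat n k : (k <= n)%nat -> exists z : nat, Binomial.C n k = INR z.
Proof.
  revert k; induction n as [|n IH]; intros k Hk.
  - replace k with 0%nat by lia. exists 1%nat. apply C_n_0.
  - destruct k as [|k]; [exists 1%nat; apply C_n_0|].
    destruct (Nat.eq_dec k n) as [->|Hkn]; [exists 1%nat; apply C_n_n|].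
    rewrite <- pascal by lia.
    destruct (IH k ltac:(lia)) as [z1 ->], (IH (S k) ltac:(lia)) as [z2 ->].
    exists (z1 + z2)%nat. symmetry. apply plus_INR.
Qed.

Lemma fact_divide a b : (a <= b)%nat -> Nat.divide (fact a) (fact b).
Proof.
  induction 1 as [|b _ [k Hk]]; [apply Nat.divide_refl|].
  exists (S b * k)%nat. change (fact (S b)) with (S b * fact b)%nat. rewrite Hk. lia.
Qed.

Lemma acoef_integer p m s t : (1 <= t <= s)%nat -> exists z : Z, acoef p m s t = IZR z.
Proof.
  intros Ht. rewrite acoef_binomial by exact Ht.
  assert (Hq : (qm p m t <= qm p m s)%nat) by (apply Nat.Div0.div_le_mono; lia).
  destruct (fact_divide _ _ Hq) as [k Hk].
  destruct (binomial_is_nat (s - 1) (t - 1) ltac:(lia)) as [z Hz].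
  exists (Z.of_nat (z * k)).
  rewrite <- INR_IZR_INZ, Hk, Hz, !mult_INR.
  field. apply INR_fact_neq_0.
Qed.

Lemma fact_qm_1 p m : fact (qm p m 1) = 1%nat.
Proof.
  unfold qm. destruct (p ^ m)%nat as [|[|k]]; reflexivity.
Qed.

Lemma acoef_s_1 p m s : (1 <= s)%nat -> acoef p m s 1 = INR (fact (qm p m s)).
Proof.
  intros Hs. rewrite acoef_binomial, C_n_0, fact_qm_1 by lia. simpl INR. field.
Qed.

Lemma acoef_diag p m s : (1 <= s)%nat -> acoef p m s s = 1.
Proof.
  intros Hs. rewrite acoef_binomial, C_n_n by lia. field. apply INR_fact_neq_0.
Qed.

Theorem mainTheorem11 (p m : nat) (hp : prime (Z.of_nat p)) (s : nat) (hs : (1 <= s)%nat) :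
  (forall (f : R -> R) (x : R), x <> 0 ->
     locally x (fun z => forall k : nat, ex_derive_n f k z) ->
     dpf p m s * Derive_n (fun y => f (/ y)) s (/ x)
     = (-1) ^ s * sum_n_m (fun t => acoef p m s t * x ^ (s + t) * (dpf p m t * Derive_n f t x)) 1 s)
  /\ (forall t : nat, (1 <= t <= s)%nat ->
        acoef p m s t
        = Binomial.C (s - 1) (t - 1) * INR (fact (qm p m s)) / INR (fact (qm p m t))
        /\ exists z : Z, acoef p m s t = IZR z)
  /\ acoef p m s 1 = INR (fact (qm p m s))
  /\ acoef p m s s = 1.
Proof.
  split; [|split; [|split]].
  - intros f x Hx Hf. exact (scaled_Derive_n_comp_Rinv p m s f x hs Hx Hf).
  - intros t Ht. split; [exact (acoef_binomial p m s t Ht) | exact (acoef_integer p m s t Ht)].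
  - exact (acoef_s_1 p m s hs).
  - exact (acoef_diag p m s hs).
Qed.
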